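(* For any finite interval $\Lambda\subset\mathbb Z$, the map $\boldsymbol\sigma_\Lambda:\mathcal D_\Lambda\to\{0,1\}^\Lambda$ assigning to each VMD tiling its particle configuration is injective.
   Context: Tilings of a finite interval $\Lambda$: a tile occupies consecutive sites and carries a 0/1 word (its particle content): void $0$; monomer $100$; dimer $011000$; left boundary dimer $11000$ (allowed only as the first tile of $\Lambda$); and, allowed only as the last tile of $\Lambda$: right dimer $011$, right 1-monomer $1$, right 2-monomer $10$, truncated 1-dimer $0110$, truncated 2-dimer $01100$. A root tiling $R$ of $\Lambda$ is a tiling of $\Lambda$ by consecutive tiles consisting of voids and monomers, optionally with a left boundary dimer as first tile and optionally with one of right dimer, right 1-monomer, right 2-monomer as last tile; $\mathcal R_\Lambda$ denotes their set. A VMD tiling derived from $R$ is obtained by choosing a collection of disjoint pairs of consecutive tiles of $R$, each pair being either two monomers (replaced by a dimer) or a monomer followed by a right $j$-monomer, $j\in\{1,2\}$ (replaced by the truncated $j$-dimer); $\mathcal D_\Lambda(R)$ is the set of these and $\mathcal D_\Lambda=\bigcup_{R\in\mathcal R_\Lambda}\mathcal D_\Lambda(R)$. The configuration $\boldsymbol\sigma_\Lambda(\mathbf D)\in\{0,1\}^\Lambda$ of a tiling $\mathbf D$ is the concatenation of the particle contents of its tiles. *)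

From mathcomp Require Import all_boot.
Set Implicit Arguments. Unset Strict Implicit. Unset Printing Implicit Defensive.

(* A finite interval Lambda of Z is determined, up to translation, by its
   number of sites n; a configuration in {0,1}^Lambda is identified with the
   0/1 word (seq bool) of length n read from left to right.
   A tiling by consecutive tiles is identified with the list of its tiles
   from left to right (positions are then determined). *)

Inductive tile :=
  | Void
  | Mono
  | Dimer
  | LDimer        (* 11000, only first tile *)
  | RDimer        (* 011, only last tile *)
  | RMono1        (* 1, only last tile *)
  | RMono2        (* 10, only last tile *)
  | TDimer1       (* 0110, only last tile *)
  | TDimer2.      (* 01100, only last tile *)

Definition content (t : tile) : seq bool :=
  match t with
  | Void => [:: false]
  | Mono => [:: true; false; false]
  | Dimer => [:: false; true; true; false; false; false]
  | LDimer => [:: true; true; false; false; false]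
  | RDimer => [:: false; true; true]
  | RMono1 => [:: true]
  | RMono2 => [:: true; false]
  | TDimer1 => [:: false; true; true; false]
  | TDimer2 => [:: false; true; true; false; false]
  end.

Definition sigma (D : seq tile) : seq bool := flatten (map content D).

Definition is_bulk_root_tile (t : tile) : bool :=
  match t with Void | Mono => true | _ => false end.

Definition is_right_root_tile (t : tile) : bool :=
  match t with RDimer | RMono1 | RMono2 => true | _ => false end.

Definition root_tiling (n : nat) (R : seq tile) : Prop :=
  exists (l : seq tile) (m : seq tile) (r : seq tile),
    [/\ R = l ++ m ++ r,
        l = [::] \/ l = [:: LDimer],
        all is_bulk_root_tile m,
        r = [::] \/ (exists t, r = [:: t] /\ is_right_root_tile t)
      & size (sigma R) = n].

Inductive derived : seq tile -> seq tile -> Prop :=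
  | der_nil : derived [::] [::]
  | der_keep t R D : derived R D -> derived (t :: R) (t :: D)
  | der_dimer R D : derived R D -> derived (Mono :: Mono :: R) (Dimer :: D)
  | der_trunc1 R D : derived R D -> derived (Mono :: RMono1 :: R) (TDimer1 :: D)
  | der_trunc2 R D : derived R D -> derived (Mono :: RMono2 :: R) (TDimer2 :: D).

Definition VMD_tiling (n : nat) (D : seq tile) : Prop :=
  exists R, root_tiling n R /\ derived R D.

From mathcomp Require Import all_boot.

Set Implicit Arguments.
Unset Strict Implicit.
Unset Printing Implicit Defensive.

(* A configuration is decoded greedily from the left.  The only ambiguity is
   a leading 0, which starts either a Void or one of the dimer-type tiles
   01...; it is the latter exactly when the next two letters are 11, because
   the only tile whose content begins with 11 is the left boundary dimer,
   which never follows another tile. *)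

Definition is_bulk_tile (t : tile) : bool :=
  match t with Void | Mono | Dimer => true | _ => false end.

Definition is_end_tile (t : tile) : bool :=
  match t with RDimer | RMono1 | RMono2 | TDimer1 | TDimer2 => true | _ => false end.

Fixpoint capped (p q : pred tile) (D : seq tile) : bool :=
  if D is t :: D' then (if p t then capped p q D' else q t && nilp D') else true.

Definition vmd_shaped (D : seq tile) : bool :=
  capped is_bulk_tile is_end_tile (if D is LDimer :: D' then D' else D).

Fixpoint decode_bulk (w : seq bool) : seq tile :=
  match w with
  | [::] => [::]
  | true :: false :: false :: w' => Mono :: decode_bulk w'
  | [:: true] => [:: RMono1]
  | [:: true; false] => [:: RMono2]
  | false :: true :: true :: false :: false :: false :: w' => Dimer :: decode_bulk w'
  | [:: false; true; true] => [:: RDimer]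
  | [:: false; true; true; false] => [:: TDimer1]
  | [:: false; true; true; false; false] => [:: TDimer2]
  | false :: w' => Void :: decode_bulk w'
  | _ => [::]
  end.

Definition decode (w : seq bool) : seq tile :=
  if w is true :: true :: false :: false :: false :: w' then LDimer :: decode_bulk w'
  else decode_bulk w.

Lemma sigma_cons t D : sigma (t :: D) = content t ++ sigma D.
Proof. by []. Qed.

Lemma capped_cat (p q : pred tile) m r :
  all p m -> (r = [::] \/ exists t, r = [:: t] /\ q t) -> capped p q (m ++ r).
Proof.
elim: m => [_ [->|[t [-> qt]]] //=|t m IHm /= /andP[-> pm] qr]; last exact: IHm.
by rewrite qt if_same.
Qed.

Lemma derived_nilp R D : derived R D -> nilp D = nilp R.
Proof. by case. Qed.

Lemma derived_capped R D :
  derived R D -> capped is_bulk_root_tile is_right_root_tile R ->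
  capped is_bulk_tile is_end_tile D.
Proof.
elim=> {R D} //= [t R D dRD IHD|R D dRD _|R D dRD _]; rewrite ?(derived_nilp dRD) //.
by case: t.
Qed.

Lemma capped_sigma_not_11 D :
  capped is_bulk_tile is_end_tile D -> ~~ prefix [:: true; true] (sigma D).
Proof. by case: D => [|[] [|? ?]]. Qed.

Lemma decode_bulk_Void w :
  ~~ prefix [:: true; true] w -> decode_bulk (false :: w) = Void :: decode_bulk w.
Proof. by case: w => [|[] [|[] [|[] [|[] [|[] ?]]]]]. Qed.

Lemma decode_bulkK D :
  capped is_bulk_tile is_end_tile D -> decode_bulk (sigma D) = D.
Proof.
elim: D => [|t D IHD] //; case: t => cD; rewrite sigma_cons.
- have {}cD : capped is_bulk_tile is_end_tile D := cD.
  by rewrite [_ ++ _]/= decode_bulk_Void ?capped_sigma_not_11 ?IHD.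
- by rewrite /= (IHD cD).
- by rewrite /= (IHD cD).
- by [].
all: by case: D cD {IHD}.
Qed.

Lemma decode_not_11 w : ~~ prefix [:: true; true] w -> decode w = decode_bulk w.
Proof. by case: w => [|[] [|[] [|? ?]]]. Qed.

Lemma decodeK D : vmd_shaped D -> decode (sigma D) = D.
Proof.
case: D => [|[] D] // cD;
  try by rewrite decode_not_11 ?decode_bulkK ?capped_sigma_not_11.
by rewrite sigma_cons /= decode_bulkK.
Qed.

Lemma capped_vmd_shaped D : capped is_bulk_tile is_end_tile D -> vmd_shaped D.
Proof. by case: D => [|[]]. Qed.

Lemma derived_LDimer R D :
  derived (LDimer :: R) D -> exists2 D', D = LDimer :: D' & derived R D'.
Proof. by move=> dRD; inversion_clear dRD as [|? ? D' dRD'| | |]; exists D'. Qed.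

Lemma VMD_tiling_shaped n D : VMD_tiling n D -> vmd_shaped D.
Proof.
move=> [_ [[l [m [r [-> [->|->] bulk_m end_r _]]]] dRD]];
  have root_mr := capped_cat bulk_m end_r.
- exact/capped_vmd_shaped/(derived_capped dRD).
- by case/derived_LDimer: dRD => D' -> /derived_capped; apply.
Qed.

Theorem lemma2p2 (n : nat) (D1 D2 : seq tile) :
  VMD_tiling n D1 -> VMD_tiling n D2 -> sigma D1 = sigma D2 -> D1 = D2.
Proof.
move=> /VMD_tiling_shaped/decodeK D1K /VMD_tiling_shaped/decodeK D2K sD.
by rewrite -D1K -D2K sD.
Qed.
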